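(* For every $n\ge1$ there is an injective map from $\bar{Q}_3(0,n)$ to $\bar{P}_3(0,n)$.
   Context: Partitions: $\lambda_1\ge\cdots\ge\lambda_\ell>0$, $\ell(\lambda)=\ell$, $\lambda_i=0$ for $i>\ell$, $s(\lambda)$ the smallest part with $s(\emptyset)=+\infty$. Rank $=\lambda_1-\ell$. Durfee symbol $(\alpha,\beta)_j$ of $\lambda$: $j$ is the largest integer with $\lambda_j\ge j$, $\alpha$ is the conjugate of $(\lambda_1-j,\dots,\lambda_j-j)$, $\beta=(\lambda_{j+1},\lambda_{j+2},\dots)$; $|\lambda|=|\alpha|+|\beta|+j^2$. $\bar{Q}_3(0,n)$ is the set of partitions of $n$ whose Durfee symbol $(\alpha,\beta)_j$ satisfies $j\ge1$, $\beta_1=j$, $\ell(\beta)-\ell(\alpha)\ge1$, $\alpha_1=\alpha_2=j$, $s(\alpha)=1$ and $s(\beta)=2$. $\bar{P}_3(0,n)$ is the set of partitions of $n$ with rank $\ge0$ whose Durfee symbol $(\gamma,\delta)_{j'}$ satisfies $j'\ge1$, $\ell(\gamma)=\ell(\delta)$, $\gamma_1\le j'-2$, $\delta_1=j'$ and $s(\delta)=1$. *)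

(* Partitions are represented as sequences of nat
   [:: lambda_1; ...; lambda_l] (weakly decreasing, positive entries). *)
From mathcomp Require Import all_boot all_order all_algebra.
Set Implicit Arguments. Unset Strict Implicit. Unset Printing Implicit Defensive.
Import GRing.Theory Num.Theory.

Definition is_partition_of (n : nat) (la : seq nat) : bool :=
  [&& sorted geq la, all (fun x => 0 < x) la & sumn la == n].

(* 1-indexed part lambda_i, with lambda_i = 0 for i > l(lambda) (and i = 0) *)
Definition part (la : seq nat) (i : nat) : nat := nth 0 la i.-1.

Definition rank (la : seq nat) : int := ((part la 1)%:Z - (size la)%:Z)%R.

(* smallest part; None encodes +infinity (empty partition) *)
Definition smallest (la : seq nat) : option nat :=
  if la is x :: s then Some (foldr minn x s) else None.

Definition conjugate (mu : seq nat) : seq nat :=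
  mkseq (fun i => count (fun x => i < x) mu) (part mu 1).

Definition durfee_j (la : seq nat) : nat :=
  \max_(i < size la | i.+1 <= part la i.+1) i.+1.

Definition durfee_alpha (la : seq nat) : seq nat :=
  let j := durfee_j la in conjugate [seq x - j | x <- take j la].
Definition durfee_beta (la : seq nat) : seq nat := drop (durfee_j la) la.

Definition Qbar3 (n : nat) : pred (seq nat) := fun la =>
  let j := durfee_j la in
  let al := durfee_alpha la in
  let be := durfee_beta la in
  [&& is_partition_of n la, 1 <= j, part be 1 == j,
      ((size al)%:Z + 1 <= (size be)%:Z)%R,
      part al 1 == j, part al 2 == j,
      smallest al == Some 1 & smallest be == Some 2].

Definition Pbar3 (n : nat) : pred (seq nat) := fun la =>
  let j' := durfee_j la in
  let ga := durfee_alpha la in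
  let de := durfee_beta la in
  [&& is_partition_of n la, (0 <= rank la)%R, 1 <= j', size ga == size de,
      ((part ga 1)%:Z <= (j')%:Z - 2)%R,
      part de 1 == j' & smallest de == Some 1].

From mathcomp Require Import all_boot all_order all_algebra zify.
Set Implicit Arguments. Unset Strict Implicit. Unset Printing Implicit Defensive.
Import Order.TTheory GRing.Theory.

(* A partition with Durfee square j is written  assemble j x be : its first j
   rows have lengths j + x_1, ..., j + x_j (so alpha is the conjugate of x)
   and be = beta lists the rows below the square.  For lambda in
   \bar{Q}_3(0,n) all x_i >= 2, x_1 > x_2, beta_1 = j, all beta_k >= 2 and
   x_1 < l(beta) = m.  The image has Durfee square j+1, row excesses
     x' = (beta'_2 - 1, ..., beta'_j - 1, 0, 0)   (beta' = conjugate of beta)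
   and lower part the conjugate of  d = (m-1, x_1-2, x_2-1, ..., x_j-1);
   this is  qmap j x be  below.
   Counting cells gives the same size, the conjugate of x' and d both have
   m-1 parts (rank 0), and d_1 > d_2 makes the smallest part of d's
   conjugate equal to 1.  Every ingredient can be read back from the image. *)

Lemma geq_trans : transitive geq.
Proof. by move=> b a c /= hab hbc; apply: leq_trans hbc hab. Qed.

Lemma geq_anti : antisymmetric geq.
Proof. by move=> a b /= /andP [hba hab]; apply/eqP; rewrite eqn_leq hab hba. Qed.

Lemma sorted_le_head s : sorted geq s -> all (fun y => y <= head 0 s) s.
Proof. by case: s => [|a t] //= hs; rewrite leqnn (order_path_min geq_trans hs). Qed.

Lemma sorted_geq_cat s1 s2 :
  sorted geq s1 -> sorted geq s2 -> allrel geq s1 s2 -> sorted geq (s1 ++ s2).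
Proof. by rewrite !(sorted_pairwise geq_trans) pairwise_cat => -> -> ->. Qed.

Lemma sumn_pred s : all (fun y => 0 < y) s -> sumn [seq y.-1 | y <- s] + size s = sumn s.
Proof. by elim: s => [|y s IH] //= /andP [hy /IH]; lia. Qed.

Lemma map_pred_inj s1 s2 : all (fun y => 0 < y) s1 -> all (fun y => 0 < y) s2 ->
  [seq y.-1 | y <- s1] = [seq y.-1 | y <- s2] -> s1 = s2.
Proof.
elim: s1 s2 => [|a s1 IH] [|b s2] //= /andP [ha h1] /andP [hb h2] [eab e].
by rewrite (IH _ h1 h2 e); congr (_ :: _); lia.
Qed.

(* Column counts.  count_gt i s is the length of column i+1 of s. *)

Definition count_gt (i : nat) (s : seq nat) : nat := count (fun y => i < y) s.

Lemma count_gt_mono i k s : i <= k -> count_gt k s <= count_gt i s.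
Proof. by move=> hik; apply: sub_count => y /=; apply: leq_ltn_trans. Qed.

Lemma count_gt_all i s : all (fun y => i < y) s -> count_gt i s = size s.
Proof. by move=> hs; apply/eqP; rewrite -all_count. Qed.

Lemma count_gt_bounded i s : all (fun y => y <= i) s -> count_gt i s = 0.
Proof.
move=> hs; rewrite /count_gt (eq_in_count (a2 := pred0)) ?count_pred0 //.
by move=> y /(allP hs) /=; rewrite ltnNge => ->.
Qed.

Lemma count_gt_head i s : i < head 0 s -> 0 < count_gt i s.
Proof. by case: s => [|y s] //= ->. Qed.

Lemma sum_ltn y M : \sum_(i < M) (i < y : nat) = minn y M.
Proof.
elim: M => [|M IH]; first by rewrite big_ord0 minn0.
by rewrite big_ord_recr /= IH; case: (ltnP M y) => /= hM; lia.
Qed.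

Lemma sumn_mkseq f N : sumn (mkseq f N) = \sum_(i < N) f i.
Proof. by rewrite sumnE /mkseq big_map -(big_mkord xpredT) /index_iota subn0. Qed.

Lemma sum_count_gt s M : all (fun y => y <= M) s -> \sum_(i < M) count_gt i s = sumn s.
Proof.
elim: s => [|y s IH] /=; first by rewrite big1.
case/andP => hy /IH <-; rewrite /count_gt.
under eq_bigr => i _ do rewrite /=.
by rewrite big_split /= sum_ltn (minn_idPl hy).
Qed.

Lemma count_gt_inj s1 s2 : sorted geq s1 -> sorted geq s2 ->
  all (fun y => 0 < y) s1 -> all (fun y => 0 < y) s2 ->
  (forall i, count_gt i s1 = count_gt i s2) -> s1 = s2.
Proof.
move=> hs1 hs2 hp1 hp2 hc; apply: (sorted_eq geq_trans geq_anti hs1 hs2).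
have mult k s : count_mem k.+1 s + count_gt k.+1 s = count_gt k s.
  elim: s => [|y s IHs] //=; rewrite /count_gt /= in IHs *.
  by case: (ltngtP y k.+1) => hy /=; lia.
have mult0 s : all (fun y => 0 < y) s -> count_mem 0 s = 0.
  by move=> hs; rewrite (eq_in_count (a2 := pred0)) ?count_pred0 // => y /(allP hs); case: y.
apply/allP => -[|k] _ /=; first by rewrite !mult0.
apply/eqP/(@addIn (count_gt k.+1 s2)).
by rewrite -{1}hc !mult hc.
Qed.

Lemma conjugateE mu : conjugate mu = mkseq (count_gt^~ mu) (head 0 mu).
Proof. by case: mu. Qed.

Lemma size_conjugate mu : size (conjugate mu) = head 0 mu.
Proof. by rewrite conjugateE size_mkseq. Qed.

Lemma nth_conjugate mu i : i < head 0 mu -> nth 0 (conjugate mu) i = count_gt i mu.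
Proof. by move=> hi; rewrite conjugateE nth_mkseq. Qed.

Lemma head_conjugate mu : 0 < head 0 mu -> head 0 (conjugate mu) = count_gt 0 mu.
Proof. by move=> hmu; rewrite -nth0 nth_conjugate. Qed.

Lemma mem_conjugate mu c : c \in conjugate mu -> exists2 i, i < head 0 mu & c = count_gt i mu.
Proof. by rewrite conjugateE => /mapP [i]; rewrite mem_iota => /andP [_ hi] ->; exists i. Qed.

Lemma conjugate_sorted mu : sorted geq (conjugate mu).
Proof.
rewrite conjugateE; apply/(sortedP 0) => i; rewrite size_mkseq => hi.
by rewrite !nth_mkseq ?(ltnW hi) //; apply: count_gt_mono (leqnSn i).
Qed.

Lemma conjugate_pos mu : all (fun c => 0 < c) (conjugate mu).
Proof. by apply/allP => c /mem_conjugate [i /count_gt_head hi ->]. Qed.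

Lemma conjugate_le_size mu : all (fun c => c <= size mu) (conjugate mu).
Proof. by apply/allP => c /mem_conjugate [i _ ->]; apply: count_size. Qed.

Lemma sumn_conjugate mu : sorted geq mu -> sumn (conjugate mu) = sumn mu.
Proof.
move=> hmu; rewrite conjugateE sumn_mkseq sum_count_gt //; exact: sorted_le_head.
Qed.

Lemma conjugate_inj mu nu : sorted geq mu -> sorted geq nu ->
  all (fun y => 0 < y) mu -> all (fun y => 0 < y) nu ->
  conjugate mu = conjugate nu -> mu = nu.
Proof.
move=> hmu hnu pmu pnu hc; apply: count_gt_inj => // i.
have hhead : head 0 mu = head 0 nu by rewrite -!size_conjugate hc.
case: (ltnP i (head 0 mu)) => hi.
  by rewrite -!nth_conjugate -?hhead // hc.
have below s : sorted geq s -> head 0 s <= i -> count_gt i s = 0.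
  by move=> hs hsi; apply: count_gt_bounded; apply: sub_all (sorted_le_head hs) => y /leq_trans; apply.
by rewrite !below // -hhead.
Qed.

Lemma foldr_minn_mem a t : foldr minn a t \in a :: t.
Proof.
elim: t => [|z t IH] /=; first by rewrite inE.
rewrite !inE; case: (leqP z (foldr minn a t)) => hz; first by rewrite eqxx orbT.
by move: IH; rewrite inE => /orP [->|->]; rewrite ?orbT.
Qed.

Lemma foldr_minn_le a t : all (fun y => foldr minn a t <= y) (a :: t).
Proof.
elim: t => [|z t IH] /=; first by rewrite leqnn.
case/andP: IH => ha ht; case: (leqP z (foldr minn a t)) => hz /=.
  by rewrite leqnn (leq_trans hz ha); apply: sub_all ht => y; apply: leq_trans.
by rewrite ha (ltnW hz).
Qed.

Lemma smallestP s k : smallest s = Some k <-> k \in s /\ all (fun y => k <= y) s.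
Proof.
case: s => [|a t]; rewrite /smallest; first by split => [//|[]].
split => [[<-] | [hk hall]]; first by split; [apply: foldr_minn_mem | apply: foldr_minn_le].
congr Some; apply/eqP; rewrite eqn_leq (allP (foldr_minn_le a t)) //=.
exact: (allP hall) (foldr_minn_mem a t).
Qed.

Lemma smallest_conjugate mu : sorted geq mu -> 0 < head 0 mu ->
  (smallest (conjugate mu) == Some 1) = (nth 0 mu 1 < head 0 mu).
Proof.
case: mu => [|h t] //= ht hh; rewrite nth0.
have last_col : count_gt h.-1 (h :: t) = (count_gt h.-1 t).+1.
  by rewrite /count_gt /= ltn_predL hh.
apply/eqP/idP => [/smallestP [/mem_conjugate [i /= hi hci] _] | hth].
  have : count_gt h.-1 (h :: t) <= 1 by rewrite hci count_gt_mono // -ltnS prednK.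
  rewrite last_col ltnS leqn0 => /eqP ht0.
  rewrite ltnNge; apply/negP => hle.
  suff : 0 < count_gt h.-1 t by rewrite ht0.
  by apply: count_gt_head; rewrite prednK.
apply/smallestP; split; last exact: conjugate_pos.
rewrite conjugateE; apply/mapP; exists h.-1; first by rewrite mem_iota /= prednK.
rewrite last_col count_gt_bounded //.
apply: sub_all (sorted_le_head (path_sorted ht)) => y hy.
by rewrite -ltnS prednK // (leq_ltn_trans hy) // -nth0.
Qed.

Lemma durfee_le la : durfee_j la <= size la.
Proof. by apply/bigmax_leqP => i _. Qed.

Lemma durfee_eq la k : k <= size la ->
  (forall i, i < size la -> (i < nth 0 la i) = (i < k)) -> durfee_j la = k.
Proof.
move=> hk hla; apply/eqP; rewrite eqn_leq; apply/andP; split.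
  by apply/bigmax_leqP => i; rewrite /part /= hla.
case: k hk hla => [//|k] hk hla.
have := @leq_bigmax_cond _ (fun i : 'I_(size la) => i.+1 <= part la i.+1) (fun i => i.+1) (Ordinal hk).
by rewrite /part /= hla //= ltnSn => /(_ isT).
Qed.

Definition assemble (j : nat) (x be : seq nat) : seq nat := [seq y + j | y <- x] ++ be.

Section Assemble.
Variables (j : nat) (x be : seq nat).
Hypotheses (hx : size x = j) (hbe : all (fun y => y <= j) be).

Lemma durfee_assemble : durfee_j (assemble j x be) = j.
Proof.
apply: durfee_eq => [|i]; first by rewrite size_cat size_map hx leq_addr.
rewrite size_cat size_map hx nth_cat size_map hx => _.
case: (ltnP i j) => hij.
  by rewrite (nth_map 0) ?hx // (leq_trans hij) ?leq_addl.
have hbj : nth 0 be (i - j) <= j.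
  by case: (ltnP (i - j) (size be)) => [/(mem_nth 0)/(allP hbe) | /(nth_default 0) ->].
by apply/negbTE; rewrite -leqNgt (leq_trans hbj).
Qed.

Lemma durfee_alpha_assemble : durfee_alpha (assemble j x be) = conjugate x.
Proof.
rewrite /durfee_alpha durfee_assemble take_size_cat ?size_map //.
by rewrite -map_comp (eq_map (addnK j)) map_id.
Qed.

Lemma durfee_beta_assemble : durfee_beta (assemble j x be) = be.
Proof. by rewrite /durfee_beta durfee_assemble drop_size_cat ?size_map. Qed.

Lemma sumn_assemble : sumn (assemble j x be) = sumn x + j * j + sumn be.
Proof.
have shift s : sumn [seq y + j | y <- s] = sumn s + j * size s.
  by elim: s => [|y s IH] /=; lia.
by rewrite sumn_cat shift hx.
Qed.

Lemma assemble_partition : sorted geq x -> sorted geq be -> all (fun y => 0 < y) be ->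
  is_partition_of (sumn x + j * j + sumn be) (assemble j x be).
Proof.
move=> hxs hbs hbp; rewrite /is_partition_of sumn_assemble eqxx andbT all_cat hbp andbT.
apply/andP; split.
  apply: sorted_geq_cat => //.
    by rewrite sorted_map; apply: sub_sorted hxs => a b /=; rewrite leq_add2r.
  apply/allrelP => _ z /mapP [y _ ->] /(allP hbe) hz /=.
  exact: leq_trans hz (leq_addl _ _).
apply/allP => _ /mapP [y hy ->]; rewrite addn_gt0 orbC -hx.
by case: (x) hy.
Qed.

End Assemble.

Lemma assemble_inj j x1 x2 be1 be2 : size x1 = j -> size x2 = j ->
  assemble j x1 be1 = assemble j x2 be2 -> x1 = x2 /\ be1 = be2.
Proof.
move=> h1 h2 /eqP; rewrite eqseq_cat ?size_map ?h1 ?h2 // => /andP [/eqP e /eqP ->].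
by split => //; apply: inj_map e; apply: addIn.
Qed.

Record q_shape (j : nat) (x be : seq nat) : Prop := QShape {
  qs_size : size x = j;
  qs_rows_sorted : sorted geq x;
  qs_rows_ge2 : all (fun y => 1 < y) x;
  qs_rows_top : nth 0 x 1 < head 0 x;
  qs_beta_sorted : sorted geq be;
  qs_beta_ge2 : all (fun y => 1 < y) be;
  qs_beta_head : head 0 be = j;
  qs_beta_long : head 0 x < size be }.

Definition qmap_rows (be : seq nat) : seq nat :=
  [seq c.-1 | c <- behead (conjugate be)] ++ [:: 0; 0].

Definition qmap_cols (m : nat) (x : seq nat) : seq nat :=
  m.-1 :: (head 0 x).-2 :: [seq y.-1 | y <- behead x].

Definition qmap (j : nat) (x be : seq nat) : seq nat :=
  assemble j.+1 (qmap_rows be) (conjugate (qmap_cols (size be) x)).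

Section QShape.
Variables (j : nat) (x be : seq nat).
Hypothesis hq : q_shape j x be.

Lemma qs_beta_le : all (fun y => y <= j) be.
Proof. by rewrite -(qs_beta_head hq); apply: sorted_le_head (qs_beta_sorted hq). Qed.

(* The Durfee square has size at least 2 (beta_1 = j and beta is non-empty). *)
Lemma qs_j : 1 < j.
Proof.
rewrite -(qs_beta_head hq); have := qs_beta_long hq; have := qs_beta_ge2 hq.
by case: (be) => [|b s] /=; [rewrite ltn0 | case/andP].
Qed.

Lemma qs_rows_head : 2 < head 0 x.
Proof.
have hx1 : 1 < nth 0 x 1 by apply: (allP (qs_rows_ge2 hq)); rewrite mem_nth // (qs_size hq) qs_j.
exact: leq_ltn_trans hx1 (qs_rows_top hq).
Qed.

Lemma qs_rows_behead :
  [/\ x = head 0 x :: behead x, size (behead x) = j.-1,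
      sorted geq (behead x), all (fun y => 1 < y) (behead x) &
      all (fun y => y < head 0 x) (behead x)].
Proof.
have := qs_size hq; have := qs_rows_sorted hq; have := qs_rows_ge2 hq; have := qs_rows_top hq.
have := qs_j; case: (x) => [|a t] /=; first by lia.
move=> _ htop /andP [_ hge2] hs hsize; split => //; first by rewrite -hsize.
  exact: path_sorted hs.
apply: sub_all (sorted_le_head (path_sorted hs)) => y hy.
by rewrite (leq_ltn_trans hy) // -nth0.
Qed.

Lemma qs_conjugate_beta : conjugate be = size be :: behead (conjugate be).
Proof.
have hpos : 0 < head 0 be by rewrite (qs_beta_head hq) ltnW ?qs_j.
have <- : head 0 (conjugate be) = size be.
  by rewrite head_conjugate // count_gt_all //; apply: sub_all (qs_beta_ge2 hq) => y; apply: ltnW.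
have : 0 < size (conjugate be) by rewrite size_conjugate.
by case: (conjugate be).
Qed.

(* Since all parts of beta are at least 2, its second column also has length m. *)
Lemma qs_conjugate_beta_behead :
  [/\ size (behead (conjugate be)) = j.-1, head 0 (behead (conjugate be)) = size be,
      sorted geq (behead (conjugate be)) & all (fun c => 0 < c) (behead (conjugate be))].
Proof.
have hj := qs_j; have hbh := qs_beta_head hq.
split.
- by rewrite size_behead size_conjugate hbh.
- rewrite -nth0 nth_behead nth_conjugate ?hbh // count_gt_all //; exact: qs_beta_ge2 hq.
- by have := conjugate_sorted be; rewrite qs_conjugate_beta => /path_sorted.
- by apply/allP => c /mem_behead; apply: (allP (conjugate_pos be)).
Qed.

Lemma qmap_rows_size : size (qmap_rows be) = j.+1.
Proof.
have [hsize _ _ _] := qs_conjugate_beta_behead.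
by rewrite size_cat size_map hsize /=; have := qs_j; lia.
Qed.

Lemma qmap_rows_sorted : sorted geq (qmap_rows be).
Proof.
have [_ _ hsorted _] := qs_conjugate_beta_behead.
apply: sorted_geq_cat => //.
  by rewrite sorted_map; apply: sub_sorted hsorted => a b /= hab; lia.
by apply/allrelP => a b _; rewrite !inE => /orP [] /eqP -> /=.
Qed.

Lemma qmap_rows_head : head 0 (qmap_rows be) = (size be).-1.
Proof.
have [hsize hhead _ _] := qs_conjugate_beta_behead; have := qs_j; rewrite /qmap_rows.
by case: (behead (conjugate be)) hsize hhead => [|c s] /=; [lia | move=> _ ->].
Qed.

(* The two trailing rows of the new square are empty, leaving at most j-1 cells in its
   column beyond the square. *)
Lemma qmap_rows_count : count (fun y => 0 < y) (qmap_rows be) <= j.-1.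
Proof.
have [hsize _ _ _] := qs_conjugate_beta_behead.
rewrite count_cat /=; have := count_size (fun y => 0 < y) [seq c.-1 | c <- behead (conjugate be)].
by rewrite size_map hsize; lia.
Qed.

Lemma qmap_rows_sum : sumn (qmap_rows be) + j.-1 + size be = sumn be.
Proof.
have [hsize _ _ hpos] := qs_conjugate_beta_behead.
have := sumn_conjugate (qs_beta_sorted hq); rewrite qs_conjugate_beta /= => <-.
by rewrite sumn_cat /= -(sumn_pred hpos) hsize; lia.
Qed.

Lemma qmap_cols_size : size (qmap_cols (size be) x) = j.+1.
Proof.
have [_ hsize _ _ _] := qs_rows_behead.
by rewrite /= size_map hsize; have := qs_j; lia.
Qed.

(* d_2 < d_1, because x_1 < m. *)
Lemma qmap_cols_top : nth 0 (qmap_cols (size be) x) 1 < head 0 (qmap_cols (size be) x).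
Proof. by have := qs_beta_long hq; have := qs_rows_head; rewrite /=; lia. Qed.

Lemma qmap_cols_sorted : sorted geq (qmap_cols (size be) x).
Proof.
have [_ _ hsorted _ hlt] := qs_rows_behead.
rewrite /= (path_min_sorted (x := (head 0 x).-2)); last first.
  by apply/allP => _ /mapP [y /(allP hlt) hy ->] /=; lia.
apply/andP; split; first by have := qs_beta_long hq; rewrite /=; lia.
by rewrite sorted_map; apply: sub_sorted hsorted => a b /= hab; lia.
Qed.

Lemma qmap_cols_pos : all (fun y => 0 < y) (qmap_cols (size be) x).
Proof.
have [_ _ _ hge2 _] := qs_rows_behead.
have := qs_beta_long hq; have := qs_rows_head; rewrite /= => h3 hm.
apply/and3P; split; try lia.
by apply/allP => _ /mapP [y /(allP hge2) hy ->] /=; lia.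
Qed.

Lemma qmap_cols_sum : sumn (qmap_cols (size be) x) + j.+1 = (size be).-1 + sumn x.
Proof.
have [hx hsize _ hge2 _] := qs_rows_behead.
have hpos : all (fun y => 0 < y) (behead x) by apply: sub_all hge2 => y; apply: ltnW.
rewrite {2}hx /= -(sumn_pred hpos) hsize; have := qs_rows_head; have := qs_j; lia.
Qed.

Lemma durfee_qmap : durfee_j (qmap j x be) = j.+1.
Proof.
apply: durfee_assemble; first exact: qmap_rows_size.
by rewrite -qmap_cols_size; apply: conjugate_le_size.
Qed.

(* The new partition has rank 0: its first row and its length both equal j + m. *)
Lemma qmap_rank : part (qmap j x be) 1 = size (qmap j x be).
Proof.
rewrite /part /qmap /assemble /= nth_cat size_map qmap_rows_size /=.
rewrite (nth_map 0) ?qmap_rows_size // nth0 qmap_rows_head.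
by rewrite size_cat size_map qmap_rows_size size_conjugate /= addnC.
Qed.

Lemma qmap_in_Pbar3 : qmap j x be \in Pbar3 (sumn (assemble j x be)).
Proof.
have hm : 3 < size be by have := qs_beta_long hq; have := qs_rows_head; lia.
have hle : all (fun y => y <= j.+1) (conjugate (qmap_cols (size be) x)).
  by rewrite -qmap_cols_size; apply: conjugate_le_size.
have hsum : sumn (assemble j x be) =
    sumn (qmap_rows be) + j.+1 * j.+1 + sumn (conjugate (qmap_cols (size be) x)).
  rewrite sumn_assemble ?(qs_size hq) ?qs_beta_le // sumn_conjugate ?qmap_cols_sorted //.
  by have := qmap_rows_sum; have := qmap_cols_sum; have := qs_j; nia.
have hpart : is_partition_of (sumn (assemble j x be)) (qmap j x be).
  rewrite hsum; apply: assemble_partition; rewrite ?qmap_rows_size //.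
  - exact: qmap_rows_sorted.
  - exact: conjugate_sorted.
  - exact: conjugate_pos.
have hrows_head : 0 < head 0 (qmap_rows be) by rewrite qmap_rows_head; lia.
have hcols_head : 0 < head 0 (qmap_cols (size be) x) by rewrite /=; lia.
rewrite unfold_in /Pbar3 hpart /rank qmap_rank subrr lexx durfee_qmap /=.
rewrite /qmap (durfee_alpha_assemble qmap_rows_size hle) (durfee_beta_assemble qmap_rows_size hle).
rewrite !size_conjugate qmap_rows_head eqxx /part /= !nth0.
rewrite (head_conjugate hrows_head) (head_conjugate hcols_head).
rewrite (count_gt_all qmap_cols_pos) qmap_cols_size eqxx.
rewrite smallest_conjugate ?qmap_cols_sorted ?qmap_cols_top // andbT.
by have := qmap_rows_count; have := qs_j; rewrite /count_gt; lia.
Qed.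

End QShape.

Lemma qmap_cols_inj j1 x1 be1 j2 x2 be2 : q_shape j1 x1 be1 -> q_shape j2 x2 be2 ->
  qmap_cols (size be1) x1 = qmap_cols (size be2) x2 -> x1 = x2 /\ size be1 = size be2.
Proof.
move=> q1 q2 [em eh et].
have [hx1 _ _ g1 _] := qs_rows_behead q1; have [hx2 _ _ g2 _] := qs_rows_behead q2.
have pos s : all (fun y => 1 < y) s -> all (fun y => 0 < y) s.
  by move=> hs; apply: sub_all hs => y; apply: ltnW.
split; last by have := qs_beta_long q1; have := qs_beta_long q2; lia.
rewrite hx1 hx2 (map_pred_inj (pos _ g1) (pos _ g2) et); congr (_ :: _).
by have := qs_rows_head q1; have := qs_rows_head q2; lia.
Qed.

Lemma qmap_rows_inj j x1 be1 x2 be2 : q_shape j x1 be1 -> q_shape j x2 be2 ->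
  size be1 = size be2 -> qmap_rows be1 = qmap_rows be2 -> be1 = be2.
Proof.
move=> q1 q2 em.
have [s1 _ _ p1] := qs_conjugate_beta_behead q1; have [s2 _ _ p2] := qs_conjugate_beta_behead q2.
move=> /eqP; rewrite eqseq_cat ?size_map ?s1 ?s2 // => /andP [/eqP e _].
have pos be : all (fun y => 1 < y) be -> all (fun y => 0 < y) be.
  by move=> hs; apply: sub_all hs => y; apply: ltnW.
apply: conjugate_inj (qs_beta_sorted q1) (qs_beta_sorted q2)
  (pos _ (qs_beta_ge2 q1)) (pos _ (qs_beta_ge2 q2)) _.
by rewrite (qs_conjugate_beta q1) (qs_conjugate_beta q2) em (map_pred_inj p1 p2 e).
Qed.

Lemma qmap_inj j1 x1 be1 j2 x2 be2 : q_shape j1 x1 be1 -> q_shape j2 x2 be2 ->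
  qmap j1 x1 be1 = qmap j2 x2 be2 -> [/\ j1 = j2, x1 = x2 & be1 = be2].
Proof.
move=> q1 q2 e.
have ej : j1 = j2 by apply: succn_inj; rewrite -(durfee_qmap q1) e durfee_qmap.
subst j2.
have [erows ecols] := assemble_inj (qmap_rows_size q1) (qmap_rows_size q2) e.
have ecols' := conjugate_inj (qmap_cols_sorted q1) (qmap_cols_sorted q2)
  (qmap_cols_pos q1) (qmap_cols_pos q2) ecols.
have [ex em] := qmap_cols_inj q1 q2 ecols'.
by split => //; apply: qmap_rows_inj q1 q2 em erows.
Qed.

Definition durfee_rows (la : seq nat) : seq nat :=
  [seq y - durfee_j la | y <- take (durfee_j la) la].

Lemma Qbar3_shape n la : la \in Qbar3 n ->
  [/\ sumn la = n, la = assemble (durfee_j la) (durfee_rows la) (durfee_beta la)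
    & q_shape (durfee_j la) (durfee_rows la) (durfee_beta la)].
Proof.
rewrite unfold_in /Qbar3 /=.
have -> : durfee_alpha la = conjugate (durfee_rows la) by [].
move=> /and5P [/and3P [hsort _ /eqP hsum] hj hbe1 hlen /and4P [_ hal2 hsmall_al /eqP hsmall_be]].
have hjl := durfee_le la.
set j := durfee_j la in hjl hj hbe1 hlen hal2 hsmall_al *.
set x := durfee_rows la in hlen hal2 hsmall_al *; set be := durfee_beta la in hbe1 hlen hsmall_be *.
have hsx : size x = j by rewrite size_map size_takel.
have hxs : sorted geq x.
  by rewrite sorted_map; apply: sub_sorted (take_sorted j hsort) => a b /= hab; apply: leq_sub2r.
have hx2 : all (fun y => 1 < y) x.
  move: hal2; rewrite /part /=; case: (ltnP 1 (head 0 x)) => hx.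
    by rewrite nth_conjugate // all_count hsx.
  by rewrite nth_default ?size_conjugate // => /eqP hj0; rewrite -hj0 in hj.
have hx0 : 0 < head 0 x.
  have : 0 < size x by rewrite hsx.
  by case: (x) hx2 => [|y s] //= /andP [hy _] _; apply: ltnW.
have hlong : head 0 x < size be by move: hlen; rewrite size_conjugate; lia.
split => //.
  rewrite /assemble /x /durfee_rows -map_comp map_id_in ?cat_take_drop // => y hy /=.
  by have := allP hx2 (y - j) (map_f _ hy); lia.
constructor => //.
- by rewrite -smallest_conjugate.
- exact: drop_sorted.
- by case/smallestP: hsmall_be.
- by move: hbe1; rewrite /part /= nth0 => /eqP.
Qed.

Theorem lemma5p3 (n : nat) (hn : 1 <= n) :
  exists f : seq nat -> seq nat,
    (forall la, la \in Qbar3 n -> f la \in Pbar3 n) /\ {in Qbar3 n &, injective f}.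
Proof.
exists (fun la => qmap (durfee_j la) (durfee_rows la) (durfee_beta la)); split.
  move=> la /Qbar3_shape [hsum hla hq].
  by have := qmap_in_Pbar3 hq; rewrite -hla hsum.
move=> la1 la2 /Qbar3_shape [_ h1 q1] /Qbar3_shape [_ h2 q2] /(qmap_inj q1 q2) [ej ex eb].
by rewrite h1 h2 ej ex eb.
Qed.
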